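(* Let $r \in \mathbb{Z}_{\geqslant 1}$. For any real $x \geqslant 1$, $$\sum_{m \leqslant x} 2^{\omega(m)} \sum_{\substack{n \leqslant x/m \\ (m, \gamma(n)) = 1}} r^{\omega(n)} = \sum_{m \leqslant x} (r+2)^{\omega(m)}.$$
   Context: $\omega(n)$ is the number of distinct prime factors of $n$ and $\gamma(n) := \prod_{p \mid n} p$ is the squarefree kernel of $n$ (with $\gamma(1)=1$). Sums run over positive integers. *)

From mathcomp Require Import all_boot all_order all_algebra.
Set Implicit Arguments. Unset Strict Implicit. Unset Printing Implicit Defensive.
Import Order.TTheory GRing.Theory Num.Theory.

Definition omega (n : nat) : nat := size (primes n).

Definition gamma (n : nat) : nat := \prod_(p <- primes n) p.

(* The function k |-> (r+2)^omega(k) expands, over the subsets J of the prime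
   divisors of k, as (2 + r)^omega(k) = sum_J 2^|J| r^(omega(k) - |J|).  The
   subsets J are in bijection with the unitary divisors d of k (d | k and
   (d, k/d) = 1) through d = k_J, the J-part of k, and then omega(d) = |J| and
   omega(k/d) = omega(k) - |J|.  Summing over k <= x and writing k = m n with
   m a unitary divisor turns the right-hand side into the left-hand side, since
   (m, gamma(n)) = 1 exactly when (m, n) = 1. *)

From mathcomp Require Import all_boot all_order all_algebra.

Set Implicit Arguments.
Unset Strict Implicit.
Unset Printing Implicit Defensive.

Import Order.TTheory GRing.Theory Num.Theory.

Lemma coprime_prodr (I : Type) (s : seq I) (F : I -> nat) m :
  coprime m (\prod_(i <- s) F i) = all (fun i => coprime m (F i)) s.
Proof.
by elim: s => [|i s IH]; rewrite ?big_nil ?big_cons ?coprimen1 // coprimeMr IH.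
Qed.

Lemma coprime_gamma m n : 0 < m -> 0 < n -> coprime m (gamma n) = coprime m n.
Proof.
move=> m_gt0 n_gt0; rewrite coprime_prodr coprime_has_primes // -all_predC.
apply: eq_in_all => p; rewrite mem_primes => /and3P[p_pr _ _] /=.
by rewrite coprime_sym prime_coprime // mem_primes p_pr m_gt0.
Qed.

Lemma expnD_subsets a b n :
  (a + b) ^ n = \sum_(J : {set 'I_n}) a ^ #|J| * b ^ (n - #|J|).
Proof.
rewrite -{1}[n]card_ord -prod_nat_const bigA_distr; apply: eq_bigr => J _.
rewrite (bigID (mem J)) /= (eq_bigr (fun _ => a)); last by move=> i ->.
rewrite [X in _ * X = _](eq_bigr (fun _ => b)); last by move=> i /negbTE ->.
rewrite !prod_nat_const; congr (_ * _ ^ _).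
rewrite -[n in n - _]card_ord -(cardC J) addKn.
by apply: eq_card => i; rewrite !inE.
Qed.

Lemma omega_partn pi n : omega n`_pi = count pi (primes n).
Proof. by rewrite /omega primes_part size_filter. Qed.

Lemma omega_partnC pi n : omega n`_pi^' = omega n - omega n`_pi.
Proof.
rewrite !omega_partn /omega -(count_predC pi (primes n)) addKn.
by apply: eq_count.
Qed.

Lemma divn_partn pi n : 0 < n -> n %/ n`_pi = n`_pi^'.
Proof. by move=> n_gt0; rewrite -{1}(partnC pi n_gt0) mulKn. Qed.

Lemma unitary_partn m n :
  0 < n -> m %| n -> coprime m (n %/ m) -> n`_\pi(m) = m.
Proof.
move=> n_gt0 m_dvd_n m_co.
have m_gt0 : 0 < m by apply: dvdn_gt0 m_dvd_n.
have q_gt0 : 0 < n %/ m by rewrite divn_gt0 // dvdn_leq.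
rewrite -{1}(divnK m_dvd_n) partnM // (part_pnat_id (pnat_pi m_gt0)).
by rewrite part_p'nat ?mul1n // -coprime_pi'.
Qed.

Section UnitaryDivisors.

Variable k : nat.
Hypothesis k_gt0 : 0 < k.

Local Notation w := (omega k).
Local Notation kprime := (fun i : 'I_w => nth 0 (primes k) i).

(* A set of prime divisors of k is encoded by the set J of its indices in [primes k]. *)
Definition kprimes (J : {set 'I_w}) : nat_pred := [pred p in [seq kprime i | i in J]].

Lemma kprime_inj : injective kprime.
Proof. by move=> i j /eqP; rewrite nth_uniq ?primes_uniq // => /eqP/val_inj. Qed.

Lemma kprime_in_primes i : kprime i \in primes k.
Proof. exact: mem_nth. Qed.

Lemma prime_kprime i : prime (kprime i).
Proof. by have := kprime_in_primes i; rewrite mem_primes => /andP[]. Qed.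

Lemma mem_kprimes J i : (kprime i \in kprimes J) = (i \in J).
Proof. by rewrite inE mem_image //; apply: kprime_inj. Qed.

Lemma count_kprimes J : count (kprimes J) (primes k) = #|J|.
Proof.
have -> : primes k = [seq kprime i | i : 'I_w].
  by rewrite -[in LHS](mkseq_nth 0 (primes k)) /mkseq -val_enum_ord -map_comp.
rewrite count_map enumT cardE /enum_mem size_filter.
by apply: eq_count => i; apply: mem_kprimes.
Qed.

Lemma omega_partn_kprimes J : omega k`_(kprimes J) = #|J|.
Proof. by rewrite omega_partn count_kprimes. Qed.

Lemma omega_divn_partn_kprimes J : omega (k %/ k`_(kprimes J)) = w - #|J|.
Proof. by rewrite divn_partn // omega_partnC omega_partn_kprimes. Qed.

Lemma dvdn_partn_kprimes J i : (kprime i %| k`_(kprimes J)) = (i \in J).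
Proof.
transitivity (kprime i \in primes k`_(kprimes J)).
  by rewrite mem_primes prime_kprime part_gt0.
by rewrite primes_part mem_filter kprime_in_primes andbT mem_kprimes.
Qed.

Lemma kprimes_dvdE m : m %| k -> kprimes [set i | kprime i %| m] =i \pi(m).
Proof.
move=> m_dvd_k p; have m_gt0 : 0 < m by apply: dvdn_gt0 m_dvd_k.
rewrite inE; apply/idP/idP => [/imageP[i] | ].
  by rewrite inE => p_dvd_m ->; rewrite mem_primes prime_kprime m_gt0 p_dvd_m.
move=> p_pi; rewrite mem_primes in p_pi; case/and3P: p_pi => p_pr _ p_m.
have /(nthP 0)[i i_lt kprime_i] : p \in primes k.
  by rewrite mem_primes p_pr k_gt0 (dvdn_trans p_m).
by apply/imageP; exists (Ordinal i_lt); rewrite ?inE /= kprime_i.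
Qed.

Lemma sum_unitary_divisors r N : k <= N ->
  \sum_(d < N.+1 | coprime d (k %/ d) && (d %| k)) 2 ^ omega d * r ^ omega (k %/ d)
  = (r + 2) ^ omega k.
Proof.
move=> le_k_N.
have partE pi : (inord k`_pi : 'I_N.+1) = k`_pi :> nat.
  by rewrite inordK // ltnS (leq_trans _ le_k_N) // dvdn_leq // dvdn_part.
rewrite addnC expnD_subsets.
rewrite (reindex_onto (fun J => inord k`_(kprimes J))
                      (fun d => [set i | kprime i %| d])).
  apply: eq_big => J; rewrite partE; last first.
    by rewrite omega_partn_kprimes omega_divn_partn_kprimes.
  rewrite dvdn_part divn_partn // coprime_partC /=.
  by apply/eqP/setP => i; rewrite inE dvdn_partn_kprimes.
move=> d /andP[d_co d_dvd_k]; apply: ord_inj.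
by rewrite partE (eq_partn _ (kprimes_dvdE d_dvd_k)) unitary_partn.
Qed.

End UnitaryDivisors.

Section Multiples.

Variables (R : Type) (idx : R) (op : SemiGroup.com_law R).

Lemma big_ord_multiples m N (P : pred nat) (F : nat -> R) : 0 < m ->
  \big[op/idx]_(k < N.+1 | P k && (m %| k)) F k
  = \big[op/idx]_(n < N.+1 | P (n * m) && (n * m <= N)) F (n * m).
Proof.
move=> m_gt0.
pose mul_m (n : 'I_N.+1) : 'I_N.+1 := inord (n * m).
pose div_m (k : 'I_N.+1) : 'I_N.+1 := inord (k %/ m).
have div_mK n : (div_m (mul_m n) == n) = (n * m <= N).
  apply/eqP/idP => [<- | le_nm_N]; last by apply: ord_inj; rewrite !inordK ?mulnK.
  rewrite inordK ?(leq_ltn_trans (leq_div _ _) (ltn_ord _)) //.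
  by rewrite -ltnS (leq_ltn_trans (leq_divM _ _)).
rewrite (reindex_onto mul_m div_m); last first.
  move=> k /andP[_ m_dvd_k]; apply: ord_inj.
  by rewrite !inordK ?divnK ?(leq_ltn_trans (leq_div _ _) (ltn_ord _)).
apply: (eq_big (op := op)) => n.
  rewrite div_mK; case: leqP => [le_nm_N | _]; rewrite ?andbF // !andbT.
  by rewrite inordK // (dvdn_mull _ (dvdnn m)) andbT.
by rewrite div_mK => /andP[_ le_nm_N]; rewrite inordK.
Qed.

End Multiples.

Lemma sum_coprime_products r N :
  \sum_(m < N.+1 | 0 < m)
     \sum_(n < N.+1 | [&& 0 < n, n * m <= N & coprime m n]) 2 ^ omega m * r ^ omega n
  = \sum_(k < N.+1 | 0 < k) (r + 2) ^ omega k.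
Proof.
under [RHS]eq_bigr => k k_gt0.
  rewrite -(sum_unitary_divisors k_gt0 r (ltnSE (ltn_ord k))); over.
rewrite [RHS](exchange_big_dep (fun m : 'I_N.+1 => 0 < m)) /=; last first.
  by move=> k m k_gt0 /andP[_ m_dvd_k]; apply: dvdn_gt0 m_dvd_k.
apply: eq_bigr => m m_gt0; under [RHS]eq_bigl => k do rewrite andbA.
rewrite (big_ord_multiples _ _ _ (fun k => (0 < k) && coprime m (k %/ m))
  (fun k => 2 ^ omega m * r ^ omega (k %/ m)) m_gt0).
apply: eq_big => n; last by rewrite mulnK.
by rewrite muln_gt0 m_gt0 mulnK // andbT andbAC -andbA.
Qed.

Local Open Scope ring_scope.

Theorem lemma4p3 (R : archiRealFieldType) (r : nat) (x : R) :
  (1 <= r)%N -> 1 <= x ->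
  \sum_(m < (Num.truncn x).+1 | (0 < (m : nat))%N && ((m%:R : R) <= x))
      muln (2 ^ omega m)%N
       (\sum_(n < (Num.truncn x).+1 |
              [&& (0 < (n : nat))%N, (n%:R : R) <= x / m%:R
                & coprime m (gamma n)])
         (r ^ omega n)%N)
  = \sum_(m < (Num.truncn x).+1 | (0 < (m : nat))%N && ((m%:R : R) <= x))
      ((r + 2) ^ omega m)%N.
Proof.
move=> _ x_ge1; have x_ge0 : 0 <= x := le_trans ler01 x_ge1.
have le_x (k : 'I_(Num.truncn x).+1) : k%:R <= x.
  by rewrite -truncn_ge_nat // -ltnS ltn_ord.
under [RHS]eq_bigl => k do rewrite le_x andbT.
rewrite -sum_coprime_products; apply: eq_big => [m | m /andP[m_gt0 _]].
  by rewrite le_x andbT.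
rewrite big_distrr /=; apply: eq_bigl => n; case: (posnP n) => [-> // | n_gt0] /=.
by rewrite ler_pdivlMr ?ltr0n // -natrM -truncn_ge_nat // coprime_gamma.
Qed.
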